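(* Let $N_1=(S_1,T_1,F_1,M_{0,1},\ell)$ and $N_2=(S_2,T_2,F_2,M_{0,2},\ell_2)$ be two Petri nets, $N_2$ being plain. Then $N_1$ and $N_2$ are branching ST-bisimilar (with explicit divergence) iff they are branching split bisimilar (with explicit divergence).
   Context: Fix visible actions $\mathrm{Act}$ and $\tau\notin\mathrm{Act}$. A Petri net $(S,T,F,M_0,\ell)$ has disjoint $S,T$, $F:(S\times T)\cup(T\times S)\to\mathbb N$, $M_0\in\mathbb N^S$, $\ell:T\to\mathrm{Act}\cup\{\tau\}$; ${}^\bullet t(s)=F(s,t)$, $t^\bullet(s)=F(t,s)$; $M[t\rangle M'$ iff ${}^\bullet t\le M$ and $M'=M-{}^\bullet t+t^\bullet$. Plain: $\ell$ injective and never $\tau$. ST-LTS: states $(M,U)\in\mathbb N^S\times T^*$, initial $(M_0,\varepsilon)$; $(M,U)\xrightarrow{a^+}(M-{}^\bullet t,Ut)$ iff $\ell(t)=a\in\mathrm{Act}$ and $M[t\rangle$; $(M,U)\xrightarrow{a^{-n}}(M+t^\bullet,U^{-n})$ ($n>0$) iff the $n$-th element $t$ of $U$ has label $a$, $U^{-n}$ being $U$ with it removed; $(M,U)\xrightarrow{\tau}(M',U)$ iff $M[t\rangle M'$ with $\ell(t)=\tau$. Split LTS: states $(M,U)\in\mathbb N^S\times\mathbb N^T$, initial $(M_0,\emptyset)$; $(M,U)\xrightarrow{a^+}(M-{}^\bullet t,U+\{t\})$ iff $\ell(t)=a\in\mathrm{Act}$ and $M[t\rangle$; $(M,U)\xrightarrow{a^-}(M+t^\bullet,U-\{t\})$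 iff $t\in U$ and $\ell(t)=a$; $(M,U)\xrightarrow{\tau}(M',U)$ iff $M[t\rangle M'$ with $\ell(t)=\tau$. For LTSs: $\Rightarrow$ is the reflexive transitive closure of $\xrightarrow{\tau}$; $\xrightarrow{(\alpha)}$ means $\xrightarrow{\alpha}$ or (if $\alpha=\tau$) equality. A branching bisimulation is a relation $\mathcal B$ relating initial states such that if $\mathfrak M_1\mathcal B\mathfrak M_2$ and $\mathfrak M_1\xrightarrow{\alpha}\mathfrak M_1'$ then $\mathfrak M_2\Rightarrow\mathfrak M_2^\dagger\xrightarrow{(\alpha)}\mathfrak M_2'$ with $\mathfrak M_1\mathcal B\mathfrak M_2^\dagger$, $\mathfrak M_1'\mathcal B\mathfrak M_2'$, and symmetrically. It is with explicit divergence if moreover: if $\mathfrak M_1\mathcal B\mathfrak M_2$ and there is an infinite $\tau$-sequence from $\mathfrak M_1$ all of whose states are related to $\mathfrak M_2$, then there is an infinite $\tau$-sequence from $\mathfrak M_2$ with every state of the first related to every state of the second, and symmetrically. Two nets are branching ST-bisimilar (resp. branching split bisimilar), possibly with explicit divergence, iff such a relation exists between their ST-LTSs (resp. split LTSs). *)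

From Stdlib Require Import List Arith.
Import ListNotations.
Set Implicit Arguments.

(* A labelled Petri net over the visible actions Act; the label None is tau.
   pre s t = F(s,t) (= •t(s)), post t s = F(t,s) (= t•(s)). *)
Record petri_net (Act : Type) := PetriNet {
  place : Type;
  transition : Type;
  pre : place -> transition -> nat;
  post : transition -> place -> nat;
  m0 : place -> nat;
  lab : transition -> option Act
}.

Definition plain {Act} (N : petri_net Act) : Prop :=
  (forall t t' : transition N, lab N t = lab N t' -> t = t') /\
  (forall t : transition N, lab N t <> None).

Definition marking {Act} (N : petri_net Act) := place N -> nat.

Definition enabled {Act} (N : petri_net Act) (M : marking N) (t : transition N) :=
  forall s, pre N s t <= M s.

Definition fires {Act} (N : petri_net Act) (M : marking N) (t : transition N)
  (M' : marking N) :=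
  enabled M t /\ forall s, M' s = M s - pre N s t + post N t s.

(* Labelled transition systems; the action None is tau. *)
Record lts (L : Type) := LTS {
  lstate : Type;
  linit : lstate;
  lstep : lstate -> option L -> lstate -> Prop
}.

Inductive st_label (Act : Type) :=
| STplus : Act -> st_label Act
| STminus : Act -> nat -> st_label Act.

Definition st_state {Act} (N : petri_net Act) : Type :=
  (marking N * list (transition N))%type.

Inductive st_step {Act} (N : petri_net Act) :
  st_state N -> option (st_label Act) -> st_state N -> Prop :=
| st_plus : forall (M M' : marking N) U t a,
    lab N t = Some a -> enabled M t ->
    (forall s, M' s = M s - pre N s t) ->
    st_step (M, U) (Some (STplus a)) (M', U ++ [t])
| st_minus : forall (M M' : marking N) U1 t U2 a n,
    0 < n -> length U1 = n - 1 -> lab N t = Some a ->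
    (forall s, M' s = M s + post N t s) ->
    st_step (M, U1 ++ t :: U2) (Some (STminus a n)) (M', U1 ++ U2)
| st_tau : forall (M M' : marking N) U t,
    lab N t = None -> fires M t M' ->
    st_step (M, U) None (M', U).

Definition st_lts {Act} (N : petri_net Act) : lts (st_label Act) :=
  @LTS _ (st_state N) (m0 N, []) (@st_step Act N).

Inductive split_label (Act : Type) :=
| SPplus : Act -> split_label Act
| SPminus : Act -> split_label Act.

Definition split_state {Act} (N : petri_net Act) : Type :=
  (marking N * (transition N -> nat))%type.

Inductive split_step {Act} (N : petri_net Act) :
  split_state N -> option (split_label Act) -> split_state N -> Prop :=
| sp_plus : forall (M M' : marking N) (U U' : transition N -> nat) t a,
    lab N t = Some a -> enabled M t ->
    (forall s, M' s = M s - pre N s t) ->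
    U' t = S (U t) -> (forall t', t' <> t -> U' t' = U t') ->
    split_step (M, U) (Some (SPplus a)) (M', U')
| sp_minus : forall (M M' : marking N) (U U' : transition N -> nat) t a,
    lab N t = Some a -> 0 < U t ->
    (forall s, M' s = M s + post N t s) ->
    U' t = U t - 1 -> (forall t', t' <> t -> U' t' = U t') ->
    split_step (M, U) (Some (SPminus a)) (M', U')
| sp_tau : forall (M M' : marking N) (U : transition N -> nat) t,
    lab N t = None -> fires M t M' ->
    split_step (M, U) None (M', U).

Definition split_lts {Act} (N : petri_net Act) : lts (split_label Act) :=
  @LTS _ (split_state N) (m0 N, fun _ => 0) (@split_step Act N).

Inductive tau_star {L} (X : lts L) : lstate X -> lstate X -> Prop :=
| tau_refl : forall p, tau_star X p p
| tau_cons : forall p p' p'', lstep X p None p' -> tau_star X p' p'' ->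
    tau_star X p p''.

Definition branching_transfer {L} (X Y : lts L)
  (B : lstate X -> lstate Y -> Prop) : Prop :=
  forall p q, B p q -> forall alpha p', lstep X p alpha p' ->
    exists q_dag q', tau_star Y q q_dag /\
      (lstep Y q_dag alpha q' \/ (alpha = None /\ q' = q_dag)) /\
      B p q_dag /\ B p' q'.

Definition converse {A B : Type} (R : A -> B -> Prop) : B -> A -> Prop :=
  fun b a => R a b.

Definition branching_bisimulation {L} (X Y : lts L)
  (B : lstate X -> lstate Y -> Prop) : Prop :=
  B (linit X) (linit Y) /\ @branching_transfer L X Y B /\
  @branching_transfer L Y X (converse B).

Definition divergence_transfer {L} (X Y : lts L)
  (B : lstate X -> lstate Y -> Prop) : Prop :=
  forall p q, B p q ->
    forall f : nat -> lstate X,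
      f 0 = p -> (forall n, lstep X (f n) None (f (S n))) ->
      (forall n, B (f n) q) ->
    exists g : nat -> lstate Y,
      g 0 = q /\ (forall n, lstep Y (g n) None (g (S n))) /\
      (forall n m, B (f n) (g m)).

Definition branching_bisimulation_div {L} (X Y : lts L)
  (B : lstate X -> lstate Y -> Prop) : Prop :=
  @branching_bisimulation L X Y B /\ @divergence_transfer L X Y B /\
  @divergence_transfer L Y X (converse B).

Definition branching_ST_bisimilar {Act} (N1 N2 : petri_net Act) : Prop :=
  exists B, @branching_bisimulation _ (st_lts N1) (st_lts N2) B.
Definition branching_ST_bisimilar_div {Act} (N1 N2 : petri_net Act) : Prop :=
  exists B, @branching_bisimulation_div _ (st_lts N1) (st_lts N2) B.
Definition branching_split_bisimilar {Act} (N1 N2 : petri_net Act) : Prop :=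
  exists B, @branching_bisimulation _ (split_lts N1) (split_lts N2) B.
Definition branching_split_bisimilar_div {Act} (N1 N2 : petri_net Act) : Prop :=
  exists B, @branching_bisimulation_div _ (split_lts N1) (split_lts N2) B.

From Stdlib Require Import List PeanoNat Lia ClassicalEpsilon FunctionalExtensionality
  PropExtensionality.
Import ListNotations.

(* Forgetting the order of the list of current transitions, (M, U) |-> (M, multiset of U),
   maps ST-steps onto split-steps (a^{-n} becomes a^-), and every split-step from the image
   of a state lifts back to an ST-step; hence the image of a branching ST-bisimulation is a
   branching split bisimulation, for arbitrary nets.
   Conversely, a branching split bisimulation B is lifted to ST-states by relating
   (M1, U1) and (M2, U2) when U1 and U2 carry the same sequence of labels and B relates
   their images.  Plainness of N2 is what makes this work: a transition of N2 is determined
   by its label, so split-steps of N2 with visible labels are deterministic and the n-th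
   entry of U1 and of U2 are the transitions terminated by a^{-n} in either net.
   Finally N2 has no tau-steps, so no state related to a state of N2 can diverge, and both
   explicit-divergence clauses hold vacuously. *)

Definition tau_free {L} (X : lts L) : Prop := forall x x', ~ lstep X x None x'.

Definition diverges {L} (X : lts L) (p : lstate X) : Prop :=
  exists f : nat -> lstate X, f 0 = p /\ forall n, lstep X (f n) None (f (S n)).

Definition step_preserving {L L'} (X : lts L) (Y : lts L')
  (rl : option L -> option L') (h : lstate X -> lstate Y) : Prop :=
  forall x α x', lstep X x α x' -> lstep Y (h x) (rl α) (h x').

Definition step_reflecting {L L'} (X : lts L) (Y : lts L')
  (rl : option L -> option L') (h : lstate X -> lstate Y) : Prop :=
  forall x β p', lstep Y (h x) β p' -> exists α x', lstep X x α x' /\ rl α = β /\ h x' = p'.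

Definition image_rel {A B C D} (f : A -> C) (g : B -> D) (R : A -> B -> Prop)
  (c : C) (d : D) : Prop :=
  exists a b, R a b /\ f a = c /\ g b = d.

Lemma converse_image_rel {A B C D} (f : A -> C) (g : B -> D) (R : A -> B -> Prop) :
  converse (image_rel f g R) = image_rel g f (converse R).
Proof.
  apply functional_extensionality; intro d; apply functional_extensionality; intro c.
  apply propositional_extensionality; unfold converse, image_rel.
  split; intros (a & b & H & Ha & Hb); exists b, a; auto.
Qed.

Lemma tau_star_tau_free {L} (X : lts L) x y : tau_free X -> tau_star X x y -> y = x.
Proof. intros Hfree H; destruct H as [|p p' p'' Hs _]; [reflexivity | destruct (Hfree _ _ Hs)]. Qed.

Lemma tau_star_preserved {L L'} (X : lts L) (Y : lts L') rl h x x' :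
  rl None = None -> step_preserving X Y rl h -> tau_star X x x' -> tau_star Y (h x) (h x').
Proof.
  intros Htau Hh; induction 1 as [p|p p' p'' Hs _ IH]; [constructor|].
  apply tau_cons with (h p'); [|exact IH].
  rewrite <- Htau; apply Hh, Hs.
Qed.

Lemma tau_star_reflected {L L'} (X : lts L) (Y : lts L') rl h x p :
  (forall α, rl α = None -> α = None) -> step_reflecting X Y rl h ->
  tau_star Y (h x) p -> exists x', tau_star X x x' /\ h x' = p.
Proof.
  intros Htau Hh H; remember (h x) as hx eqn:E; revert x E.
  induction H as [p|p p' p'' Hs _ IH]; intros x ->.
  - exists x; split; [constructor | reflexivity].
  - destruct (Hh _ _ _ Hs) as (α & x1 & Hx & Hα & <-).
    apply Htau in Hα; subst α.
    destruct (IH x1 eq_refl) as (x' & Ht & Hx').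
    exists x'; split; [apply tau_cons with x1 | ]; assumption.
Qed.

Lemma diverges_preserved {L L'} (X : lts L) (Y : lts L') rl h p :
  rl None = None -> step_preserving X Y rl h -> diverges X p -> diverges Y (h p).
Proof.
  intros Htau Hh (f & Hf0 & Hf); exists (fun n => h (f n)); split; [congruence|].
  intro n; rewrite <- Htau; apply Hh, Hf.
Qed.

Lemma branching_transfer_image {L L'} (X1 X2 : lts L) (Y1 Y2 : lts L') rl h1 h2 B :
  (forall α, rl α = None <-> α = None) ->
  step_reflecting X1 Y1 rl h1 -> step_preserving X2 Y2 rl h2 ->
  branching_transfer X1 X2 B -> branching_transfer Y1 Y2 (image_rel h1 h2 B).
Proof.
  intros Hrl Hh1 Hh2 HT p q (x & y & Hxy & <- & <-) β p' Hs.
  destruct (Hh1 _ _ _ Hs) as (α & x' & Hx & <- & <-).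
  destruct (HT _ _ Hxy _ _ Hx) as (y0 & y' & Hy0 & Hy' & Hxy0 & Hxy').
  exists (h2 y0), (h2 y'); split; [|split].
  - apply tau_star_preserved with rl; [apply Hrl | |]; auto.
  - destruct Hy' as [Hy' | [-> ->]]; [left; apply Hh2, Hy' | right; split; [apply Hrl|]; auto].
  - split; [exists x, y0 | exists x', y']; auto.
Qed.

Lemma divergence_transfer_of_not_diverges {L} (X Y : lts L) R :
  (forall p q, R p q -> ~ diverges X p) -> divergence_transfer X Y R.
Proof. intros H p q Hpq f Hf0 Hf _; exfalso; apply (H p q Hpq); exists f; auto. Qed.

Lemma tau_free_not_diverges {L} (X : lts L) p : tau_free X -> ~ diverges X p.
Proof. intros Hfree (f & _ & Hf); exact (Hfree _ _ (Hf 0)). Qed.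

Lemma related_not_diverges {L} (X Y : lts L) B p q :
  tau_free Y -> branching_transfer X Y B -> divergence_transfer X Y B -> B p q ->
  ~ diverges X p.
Proof.
  intros Hfree HT HD Hpq (f & Hf0 & Hf).
  assert (Hrel : forall n, B (f n) q).
  { induction n as [|n IH]; [congruence|].
    destruct (HT _ _ IH _ _ (Hf n)) as (q0 & q' & Hq0 & Hq' & _ & Hrel).
    apply tau_star_tau_free in Hq0; [subst q0 | exact Hfree].
    destruct Hq' as [Hq' | [_ ->]]; [destruct (Hfree _ _ Hq') | exact Hrel]. }
  destruct (HD p q Hpq f Hf0 Hf Hrel) as (g & _ & Hg & _).
  exact (Hfree _ _ (Hg 0)).
Qed.

Section Occurrences.
Context {T : Type}.

Fixpoint occ (l : list T) (t : T) : nat :=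
  match l with
  | [] => 0
  | x :: l' => (if excluded_middle_informative (x = t) then 1 else 0) + occ l' t
  end.

Lemma occ_app l1 l2 t : occ (l1 ++ l2) t = occ l1 t + occ l2 t.
Proof. induction l1 as [|x l1 IH]; simpl; [reflexivity | rewrite IH; lia]. Qed.

Lemma In_of_occ_pos l t : 0 < occ l t -> In t l.
Proof.
  induction l as [|x l IH]; simpl; [lia|].
  destruct (excluded_middle_informative (x = t)); [left | right]; auto.
Qed.

Lemma occ_snoc_same l t : occ (l ++ [t]) t = S (occ l t).
Proof.
  rewrite occ_app; simpl; destruct (excluded_middle_informative (t = t)); [lia | congruence].
Qed.

Lemma occ_snoc_other l t t' : t' <> t -> occ (l ++ [t]) t' = occ l t'.
Proof.
  intro H; rewrite occ_app; simpl; destruct (excluded_middle_informative (t = t')); [congruence | lia].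
Qed.

Lemma occ_middle_pos A C t : 0 < occ (A ++ t :: C) t.
Proof.
  rewrite occ_app; simpl; destruct (excluded_middle_informative (t = t)); [lia | congruence].
Qed.

Lemma occ_remove_same A C t : occ (A ++ C) t = occ (A ++ t :: C) t - 1.
Proof.
  rewrite !occ_app; simpl; destruct (excluded_middle_informative (t = t)); [lia | congruence].
Qed.

Lemma occ_remove_other A C t t' : t' <> t -> occ (A ++ C) t' = occ (A ++ t :: C) t'.
Proof.
  intro H; rewrite !occ_app; simpl; destruct (excluded_middle_informative (t = t')); [congruence | lia].
Qed.

Lemma update_unique (U U1 U2 : T -> nat) t :
  U1 t = U2 t -> (forall t', t' <> t -> U1 t' = U t') -> (forall t', t' <> t -> U2 t' = U t') ->
  U1 = U2.
Proof.
  intros Ht H1 H2; apply functional_extensionality; intro t'.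
  destruct (excluded_middle_informative (t' = t)) as [->|Hne]; [|rewrite H1, H2]; auto.
Qed.

End Occurrences.

Lemma firstn_skipn_middle {X} (A C : list X) y :
  firstn (length A) (A ++ y :: C) ++ skipn (S (length A)) (A ++ y :: C) = A ++ C.
Proof. induction A as [|x A IH]; [reflexivity | exact (f_equal (cons x) IH)]. Qed.

Lemma nth_error_middle {X} (A C : list X) y : nth_error (A ++ y :: C) (length A) = Some y.
Proof. rewrite nth_error_app2, Nat.sub_diag; reflexivity. Qed.

Definition split_label_of {Act} (α : option (st_label Act)) : option (split_label Act) :=
  match α with
  | Some (STplus a) => Some (SPplus a)
  | Some (STminus a _) => Some (SPminus a)
  | None => None
  end.

Lemma split_label_of_None {Act} (α : option (st_label Act)) :
  split_label_of α = None <-> α = None.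
Proof. destruct α as [[]|]; simpl; split; congruence. Qed.

(* [a^{-n}] counts positions from 1, hence the index [n - 1]. *)
Definition admissible {Act} (w : list (option Act)) (α : option (st_label Act)) : Prop :=
  match α with
  | Some (STminus a n) => 0 < n /\ nth_error w (n - 1) = Some (Some a)
  | _ => True
  end.

Definition labels_after {Act} (w : list (option Act)) (α : option (st_label Act)) :=
  match α with
  | Some (STplus a) => w ++ [Some a]
  | Some (STminus _ n) => firstn (n - 1) w ++ skipn n w
  | None => w
  end.

Section StAndSplit.
Context {Act : Type} {N : petri_net Act}.

Definition split_of (x : st_state N) : split_state N := (fst x, occ (snd x)).

Definition st_labels (x : st_state N) : list (option Act) := map (lab N) (snd x).

Lemma st_step_split_of x α x' :
  st_step x α x' -> split_step (split_of x) (split_label_of α) (split_of x').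
Proof.
  unfold split_of; destruct 1; simpl.
  - eapply sp_plus; eauto; [apply occ_snoc_same | intros; apply occ_snoc_other; auto].
  - eapply sp_minus; eauto;
      [apply occ_middle_pos | apply occ_remove_same | intros; apply occ_remove_other; auto].
  - eapply sp_tau; eauto.
Qed.

Lemma split_step_lift x β p' :
  split_step (split_of x) β p' ->
  exists α x', st_step x α x' /\ split_label_of α = β /\ split_of x' = p'.
Proof.
  intro Hs; remember (split_of x) as p eqn:Ep.
  destruct Hs as [M M' u u' t a Hl Hen HM Hut Huo | M M' u u' t a Hl Hpos HM Hut Huo
                 | M M' u t Hl Hf];
    destruct x as [M0 U]; unfold split_of in *; simpl in Ep; injection Ep as -> ->.
  - exists (Some (STplus a)), (M', U ++ [t]); repeat split.
    + constructor; auto.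
    + simpl; f_equal; apply (update_unique (occ U) _ _ t).
      * rewrite occ_snoc_same; auto.
      * intros; apply occ_snoc_other; auto.
      * auto.
  - destruct (in_split _ _ (In_of_occ_pos _ _ Hpos)) as (A & C & ->).
    exists (Some (STminus a (S (length A)))), (M', A ++ C); repeat split.
    + apply st_minus; auto; lia.
    + simpl; f_equal; apply (update_unique (occ (A ++ t :: C)) _ _ t).
      * rewrite Hut; apply occ_remove_same.
      * intros; apply occ_remove_other; auto.
      * auto.
  - exists None, (M', U); repeat split; eapply st_tau; eauto.
Qed.

Lemma st_split_of_preserving : step_preserving (st_lts N) (split_lts N) split_label_of split_of.
Proof. exact st_step_split_of. Qed.

Lemma st_split_of_reflecting : step_reflecting (st_lts N) (split_lts N) split_label_of split_of.
Proof. exact split_step_lift. Qed.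

Lemma split_tau_step_st (U : list (transition N)) (p p' : split_state N) : split_step p None p' -> st_step (fst p, U) None (fst p', U).
Proof. intro Hs; inversion Hs; subst; eapply st_tau; eauto. Qed.

Lemma split_diverges_lift x : diverges (split_lts N) (split_of x) -> diverges (st_lts N) x.
Proof.
  intros (f & Hf0 & Hf); exists (fun n => (fst (f n), snd x)); split.
  - rewrite Hf0; destruct x; reflexivity.
  - intro n; apply split_tau_step_st, Hf.
Qed.

Lemma st_step_labels x α x' : st_step x α x' -> st_labels x' = labels_after (st_labels x) α.
Proof.
  unfold st_labels; destruct 1 as [M M' U t a Hl | M M' A t C a n Hn HA | ]; simpl.
  - rewrite map_app; simpl; rewrite Hl; reflexivity.
  - rewrite !map_app; simpl.
    replace (n - 1) with (length (map (lab N) A)) by (rewrite length_map; lia).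
    replace n with (S (length (map (lab N) A))) by (rewrite length_map; lia).
    symmetry; apply firstn_skipn_middle.
  - reflexivity.
Qed.

Lemma st_step_admissible x α x' : st_step x α x' -> admissible (st_labels x) α.
Proof.
  unfold st_labels; destruct 1 as [ | M M' A t C a n Hn HA Hl | ]; simpl; auto.
  split; [exact Hn|].
  rewrite map_app; simpl; rewrite <- Hl, <- HA, <- (length_map (lab N) A).
  apply nth_error_middle.
Qed.

Lemma st_minus_of_admissible x a n :
  admissible (st_labels x) (Some (STminus a n)) -> exists x', st_step x (Some (STminus a n)) x'.
Proof.
  destruct x as [M U]; unfold st_labels; simpl; intros [Hn Hnth].
  rewrite nth_error_map in Hnth.
  destruct (nth_error U (n - 1)) as [t|] eqn:Ht; simpl in Hnth; [|discriminate].
  injection Hnth as Hl.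
  destruct (nth_error_split U (n - 1) Ht) as (A & C & -> & HA).
  exists (fun s => M s + post N t s, A ++ C); apply st_minus; auto.
Qed.

Lemma st_tau_star_labels x x' : tau_star (st_lts N) x x' -> st_labels x' = st_labels x.
Proof.
  induction 1 as [|p p' p'' Hs _ IH]; [reflexivity|].
  rewrite IH; exact (st_step_labels _ _ _ Hs).
Qed.

Section Plain.
Hypothesis plain_N : plain N.

Lemma plain_st_tau_free : tau_free (st_lts N).
Proof. intros x x' Hs; inversion Hs; eapply (proj2 plain_N); eassumption. Qed.

Lemma plain_split_tau_free : tau_free (split_lts N).
Proof. intros x x' Hs; inversion Hs; eapply (proj2 plain_N); eassumption. Qed.

Lemma plain_split_step_deterministic (p : split_state N) β q q' :
  split_step p (Some β) q -> split_step p (Some β) q' -> q = q'.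
Proof.
  intros H1 H2; inversion H1; subst; inversion H2; subst;
    match goal with
    | Ht : lab N ?t = _, Ht' : lab N ?t' = _ |- _ =>
        assert (t' = t) by (apply (proj1 plain_N); congruence); subst t'
    end;
    f_equal; [apply functional_extensionality; intro s; congruence
             | eapply update_unique; eauto; congruence
             | apply functional_extensionality; intro s; congruence
             | eapply update_unique; eauto; congruence].
Qed.

Lemma plain_split_step_lift y α q' :
  admissible (st_labels y) α -> split_step (split_of y) (split_label_of α) q' ->
  exists y', st_step y α y' /\ split_of y' = q'.
Proof.
  intros Hadm Hs; destruct α as [[a|a n]|].
  - destruct (split_step_lift _ _ _ Hs) as ([[b|b m]|] & y' & Hy & Hb & <-); try discriminate.
    injection Hb as ->; eauto.
  - destruct (st_minus_of_admissible _ _ _ Hadm) as (y' & Hy).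
    exists y'; split; [exact Hy|].
    exact (plain_split_step_deterministic _ _ _ _ (st_step_split_of _ _ _ Hy) Hs).
  - destruct (plain_split_tau_free _ _ Hs).
Qed.

End Plain.
End StAndSplit.

Lemma st_to_split_bisimulation {Act} (N1 N2 : petri_net Act) B :
  branching_bisimulation (st_lts N1) (st_lts N2) B ->
  branching_bisimulation (split_lts N1) (split_lts N2) (image_rel split_of split_of B).
Proof.
  intros (Hinit & HT & HC); split; [|split].
  - exists (m0 N1, []), (m0 N2, []); auto.
  - apply (branching_transfer_image (st_lts N1) (st_lts N2) (split_lts N1) (split_lts N2)
              split_label_of split_of split_of B);
      auto using split_label_of_None, st_split_of_reflecting, st_split_of_preserving.
  - rewrite converse_image_rel.
    apply (branching_transfer_image (st_lts N2) (st_lts N1) (split_lts N2) (split_lts N1)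
              split_label_of split_of split_of (converse B));
      auto using split_label_of_None, st_split_of_reflecting, st_split_of_preserving.
Qed.

Definition st_lift_rel {Act} {N1 N2 : petri_net Act}
  (B : split_state N1 -> split_state N2 -> Prop) (x : st_state N1) (y : st_state N2) : Prop :=
  st_labels x = st_labels y /\ B (split_of x) (split_of y).

Lemma st_lift_transfer {Act} (N1 N2 : petri_net Act) B :
  plain N2 -> branching_transfer (split_lts N1) (split_lts N2) B ->
  branching_transfer (st_lts N1) (st_lts N2) (st_lift_rel B).
Proof.
  intros Hpl HT x y (Hlab & Hxy) α x' Hx.
  destruct (HT _ _ Hxy _ _ (st_step_split_of _ _ _ Hx)) as (q0 & q' & Hq0 & Hq' & _ & Hxq').
  apply tau_star_tau_free in Hq0; [subst q0 | apply plain_split_tau_free, Hpl].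
  destruct Hq' as [Hq' | [Hα ->]].
  - assert (Hadm : admissible (st_labels y) α)
      by (rewrite <- Hlab; exact (st_step_admissible _ _ _ Hx)).
    destruct (plain_split_step_lift Hpl _ _ _ Hadm Hq') as (y' & Hy & <-).
    exists y, y'; split; [constructor | split; [left; exact Hy |]].
    split; split; auto.
    rewrite (st_step_labels _ _ _ Hx), (st_step_labels _ _ _ Hy), Hlab; reflexivity.
  - apply split_label_of_None in Hα; subst α.
    exists y, y; split; [constructor | split; [right; auto |]].
    split; split; auto.
    rewrite (st_step_labels _ _ _ Hx); exact Hlab.
Qed.

(* Here N1 need not be plain: to answer a^{-n} of N2 we terminate the n-th entry of
   N1's list and use the transfer from N1 to N2, whose answer is forced by plainness. *)
Lemma st_lift_transfer_converse {Act} (N1 N2 : petri_net Act) B :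
  plain N2 ->
  branching_transfer (split_lts N1) (split_lts N2) B ->
  branching_transfer (split_lts N2) (split_lts N1) (converse B) ->
  branching_transfer (st_lts N2) (st_lts N1) (converse (st_lift_rel B)).
Proof.
  intros Hpl HT HC y x (Hlab & Hxy) α y' Hy.
  destruct α as [[a|a n]|]; [| | destruct (plain_st_tau_free Hpl _ _ Hy)].
  - destruct (HC _ _ Hxy _ _ (st_step_split_of _ _ _ Hy)) as (p0 & p' & Hp0 & Hp' & Hx0y & Hx'y').
    destruct Hp' as [Hp' | [Hc _]]; [|discriminate].
    destruct (tau_star_reflected _ _ _ _ x _ (fun α => proj1 (split_label_of_None α))
                st_split_of_reflecting Hp0) as (x0 & Hx0 & <-).
    destruct (split_step_lift _ _ _ Hp') as ([[b|b m]|] & x' & Hx' & Hb & <-); try discriminate.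
    injection Hb as ->.
    exists x0, x'; split; [exact Hx0 | split; [left; exact Hx' |]].
    split; split; auto.
    + rewrite (st_tau_star_labels _ _ Hx0); exact Hlab.
    + rewrite (st_step_labels _ _ _ Hx'), (st_step_labels _ _ _ Hy),
        (st_tau_star_labels _ _ Hx0), Hlab; reflexivity.
  - assert (Hadm : admissible (st_labels x) (Some (STminus a n)))
      by (rewrite Hlab; exact (st_step_admissible _ _ _ Hy)).
    destruct (st_minus_of_admissible _ _ _ Hadm) as (x' & Hx).
    destruct (HT _ _ Hxy _ _ (st_step_split_of _ _ _ Hx)) as (q0 & q' & Hq0 & Hq' & _ & Hx'q').
    apply tau_star_tau_free in Hq0; [subst q0 | apply plain_split_tau_free, Hpl].
    destruct Hq' as [Hq' | [Hc _]]; [|discriminate].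
    rewrite (plain_split_step_deterministic Hpl _ _ _ _ Hq' (st_step_split_of _ _ _ Hy)) in Hx'q'.
    exists x, x'; split; [constructor | split; [left; exact Hx |]].
    split; split; auto.
    rewrite (st_step_labels _ _ _ Hx), (st_step_labels _ _ _ Hy), Hlab; reflexivity.
Qed.

Lemma split_to_st_bisimulation {Act} (N1 N2 : petri_net Act) B :
  plain N2 -> branching_bisimulation (split_lts N1) (split_lts N2) B ->
  branching_bisimulation (st_lts N1) (st_lts N2) (st_lift_rel B).
Proof.
  intros Hpl (Hinit & HT & HC); split; [split; [reflexivity | exact Hinit] | split].
  - apply st_lift_transfer; assumption.
  - apply st_lift_transfer_converse; assumption.
Qed.

Lemma st_to_split_bisimulation_div {Act} (N1 N2 : petri_net Act) B :
  plain N2 -> branching_bisimulation_div (st_lts N1) (st_lts N2) B ->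
  branching_bisimulation_div (split_lts N1) (split_lts N2) (image_rel split_of split_of B).
Proof.
  intros Hpl (Hbis & HD & _); split; [apply st_to_split_bisimulation, Hbis | split].
  - apply divergence_transfer_of_not_diverges; intros p q (x & y & Hxy & <- & _) Hdiv.
    apply (related_not_diverges _ _ _ _ _ (plain_st_tau_free Hpl) (proj1 (proj2 Hbis)) HD Hxy).
    apply split_diverges_lift, Hdiv.
  - apply divergence_transfer_of_not_diverges; intros p q _.
    apply tau_free_not_diverges, plain_split_tau_free, Hpl.
Qed.

Lemma split_to_st_bisimulation_div {Act} (N1 N2 : petri_net Act) B :
  plain N2 -> branching_bisimulation_div (split_lts N1) (split_lts N2) B ->
  branching_bisimulation_div (st_lts N1) (st_lts N2) (st_lift_rel B).
Proof.
  intros Hpl (Hbis & HD & _); split; [apply split_to_st_bisimulation; assumption | split].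
  - apply divergence_transfer_of_not_diverges; intros x y (_ & Hxy) Hdiv.
    apply (related_not_diverges _ _ _ _ _ (plain_split_tau_free Hpl) (proj1 (proj2 Hbis)) HD Hxy).
    exact (diverges_preserved _ _ _ _ _ eq_refl st_split_of_preserving Hdiv).
  - apply divergence_transfer_of_not_diverges; intros y x _.
    apply tau_free_not_diverges, plain_st_tau_free, Hpl.
Qed.

Theorem proposition3p15 (Act : Type) (N1 N2 : petri_net Act) :
  plain N2 ->
  (branching_ST_bisimilar N1 N2 <-> branching_split_bisimilar N1 N2) /\
  (branching_ST_bisimilar_div N1 N2 <-> branching_split_bisimilar_div N1 N2).
Proof.
  intros Hpl; split; split; intros (B & HB).
  - exists (image_rel split_of split_of B); apply st_to_split_bisimulation, HB.
  - exists (st_lift_rel B); apply split_to_st_bisimulation; assumption.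
  - exists (image_rel split_of split_of B); apply st_to_split_bisimulation_div; assumption.
  - exists (st_lift_rel B); apply split_to_st_bisimulation_div; assumption.
Qed.
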